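(* Let $\mathcal{G}=(\mathcal{N},\mathcal{P})$ be a connected directed graph with nodes $\mathcal{N}=\{1,\dots,N\}$ and edges (pipes) $\mathcal{P}=\{1,\dots,P\}$, each edge written $\ell=(m,n)$ with $m,n\in\mathcal{N}$, and let $\mathbf{A}\in\mathbb{R}^{P\times N}$ be its edge-node incidence matrix ($A_{\ell,m}=+1$, $A_{\ell,n}=-1$ for $\ell=(m,n)$, all other entries of row $\ell$ zero). The edge set is partitioned as $\mathcal{P}=\mathcal{P}_a\cup\bar{\mathcal{P}}_a$ into compressor edges $\mathcal{P}_a$ and lossy pipes $\bar{\mathcal{P}}_a=\mathcal{P}\setminus\mathcal{P}_a$. Assume every cycle of $\mathcal{G}$ contains at least one lossy pipe. Fix a reference node $r\in\mathcal{N}$ with given value $\psi_r$, a vector $\mathbf{q}\in\mathbb{R}^N$ with $\mathbf{1}^\top\mathbf{q}=0$, friction parameters $a_\ell>0$ for $\ell\in\bar{\mathcal{P}}_a$, and compression ratios $\alpha_\ell>0$ for $\ell\in\mathcal{P}_a$. Consider the gas flow problem: find $\boldsymbol{\phi}\in\mathbb{R}^P$ and $\boldsymbol{\psi}\in\mathbb{R}^N$ (with the $r$-th entry equal to the given $\psi_r$) such that (i) $\mathbf{A}^\top\boldsymbol{\phi}=\mathbf{q}$; (ii) $\psi_m-\psi_n=a_\ell\,\mathrm{sign}(\phi_\ell)\,\phi_\ell^2$ for all $\ell=(m,n)\in\bar{\mathcal{P}}_a$, and $\psi_n\ge 0$ for all $n\in\mathcal{N}$; (iii) $\psi_n=\alpha_\ell\psi_m$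 and $\phi_\ell\ge 0$ for all $\ell=(m,n)\in\mathcal{P}_a$. Then, if this problem has a solution $(\boldsymbol{\phi},\boldsymbol{\psi})$, the solution is unique.
   Context: $\mathrm{sign}(x)$ equals $+1$ if $x>0$, $-1$ if $x<0$, and $0$ if $x=0$. A cycle is a closed path in the underlying undirected graph starting and ending at the same node without repeating edges or nodes. The variables $\psi_n$ represent squared gas pressures at nodes, $\phi_\ell$ gas flows on edges, and $q_n$ nodal gas injections. *)

From HB Require Import structures.
From mathcomp Require Import all_boot all_order all_algebra.
Set Implicit Arguments. Unset Strict Implicit. Unset Printing Implicit Defensive.
Import Order.TTheory GRing.Theory Num.Theory.
Local Open Scope ring_scope.

Definition joins N P (src dst : 'I_P -> 'I_N) (l : 'I_P) (u v : 'I_N) : bool :=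
  ((src l == u) && (dst l == v)) || ((src l == v) && (dst l == u)).

Definition uadj N P (src dst : 'I_P -> 'I_N) : rel 'I_N :=
  fun u v => [exists l, joins src dst l u v].

Definition connected_graph N P (src dst : 'I_P -> 'I_N) : Prop :=
  forall u v : 'I_N, connect (uadj src dst) u v.

Definition is_cycle N P (src dst : 'I_P -> 'I_N)
    (vs : seq 'I_N) (es : seq 'I_P) : Prop :=
  [/\ 0 < size es, size vs = size es, uniq vs, uniq es &
      forall (i : nat) (hi : i < size es) (v0 : 'I_N) (e0 : 'I_P),
        joins src dst (nth e0 es i) (nth v0 vs i) (nth v0 vs ((i.+1) %% size es))]%N.

Definition incidence (R : pzRingType) N P (src dst : 'I_P -> 'I_N) : 'M[R]_(P, N) :=
  \matrix_(l < P, j < N) ((j == src l)%:R - (j == dst l)%:R).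

Definition gas_flow_solution (R : realFieldType) N P (src dst : 'I_P -> 'I_N)
    (comp : {set 'I_P}) (r : 'I_N) (psir : R) (q : 'cV[R]_N)
    (a alpha : 'I_P -> R) (phi : 'cV[R]_P) (psi : 'cV[R]_N) : Prop :=
  [/\ psi r 0 = psir,
      (incidence R src dst)^T *m phi = q,
      (forall l : 'I_P, l \notin comp ->
         psi (src l) 0 - psi (dst l) 0 = a l * Num.sg (phi l 0) * (phi l 0) ^+ 2),
      (forall n : 'I_N, 0 <= psi n 0) &
      (forall l : 'I_P, l \in comp ->
         psi (dst l) 0 = alpha l * psi (src l) 0 /\ 0 <= phi l 0)].

From mathcomp Require Import all_boot all_order all_algebra.
From mathcomp Require Import lra.
Set Implicit Arguments. Unset Strict Implicit. Unset Printing Implicit Defensive.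
Import Order.TTheory GRing.Theory Num.Theory.
Local Open Scope ring_scope.

(* Uniqueness of the pressures: for two solutions, let S be the set of nodes
   where psi1 > psi2.  Compressor edges never cross the boundary of S (psi is
   scaled by alpha > 0 along them), and since x |-> sg x x^2 is increasing,
   on a lossy edge leaving S the flow difference phi1 - phi2 is positive, and
   negative on one entering S.  The flow difference has zero divergence, so
   its net outflow from S vanishes; hence no edge crosses S at all, and S is
   empty because the graph is connected and r is not in S.  Thus psi1 = psi2,
   which forces phi1 = phi2 on lossy pipes.  The flow difference is then a
   circulation supported on compressor edges; the support of a nonzero
   circulation contains a cycle, which would consist of compressors only. *)

Lemma sgr_sqr_increasing (R : realFieldType) :
  {homo (fun x : R => Num.sg x * x ^+ 2) : x y / x < y}.
Proof.
move=> x y xy /=.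
have [x0|x0|x0] := ltrgtP x 0; have [y0|y0|y0] := ltrgtP y 0; subst;
  rewrite ?(ltr0_sg x0) ?(gtr0_sg x0) ?(ltr0_sg y0) ?(gtr0_sg y0) ?sgr0; nra.
Qed.

Lemma ler_sgr_sqr (R : realFieldType) :
  {mono (fun x : R => Num.sg x * x ^+ 2) : x y / x <= y}.
Proof. exact: le_mono (@sgr_sqr_increasing R). Qed.

Lemma ltr_sgr_sqr (R : realFieldType) :
  {mono (fun x : R => Num.sg x * x ^+ 2) : x y / x < y}.
Proof. exact: leW_mono (@ler_sgr_sqr R). Qed.

Lemma sgr_sqr_inj (R : realFieldType) : injective (fun x : R => Num.sg x * x ^+ 2).
Proof. exact: inc_inj (@ler_sgr_sqr R). Qed.

Lemma sumr_eq_nat_cond (R : pzSemiRingType) (T : finType) (S : pred T) (s : T) :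
  \sum_(n | S n) (n == s)%:R = (S s)%:R :> R.
Proof.
rewrite big_mkcond (bigD1 s) //= eqxx big1 ?addr0; first by case: (S s).
by move=> n /negbTE ->; case: (S n).
Qed.

Section Circulations.

Variables (N P : nat) (src dst : 'I_P -> 'I_N).

Definition netflow (R : pzRingType) (d : 'I_P -> R) (n : 'I_N) : R :=
  \sum_l ((n == src l)%:R - (n == dst l)%:R) * d l.

Definition circulation (R : pzRingType) (d : 'I_P -> R) : Prop :=
  forall n, netflow d n = 0.

Lemma incidence_mulmxE (R : pzRingType) (phi : 'cV[R]_P) n :
  ((incidence R src dst)^T *m phi) n 0 = netflow (fun l => phi l 0) n.
Proof. by rewrite !mxE; apply: eq_bigr => l _; rewrite !mxE. Qed.

Lemma circulationB (R : pzRingType) (phi1 phi2 : 'cV[R]_P) (q : 'cV[R]_N) :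
  (incidence R src dst)^T *m phi1 = q -> (incidence R src dst)^T *m phi2 = q ->
  circulation (fun l => phi1 l 0 - phi2 l 0).
Proof.
move=> A1 A2 n; have := incidence_mulmxE (phi1 - phi2) n.
rewrite mulmxBr A1 A2 subrr mxE => /esym <-.
by apply: eq_bigr => l _; rewrite !mxE.
Qed.

Lemma netflow_cut (R : pzRingType) (d : 'I_P -> R) (S : pred 'I_N) :
  \sum_(n | S n) netflow d n = \sum_l ((S (src l))%:R - (S (dst l))%:R) * d l.
Proof.
rewrite exchange_big /=; apply: eq_bigr => l _.
by rewrite -mulr_suml sumrB !sumr_eq_nat_cond.
Qed.

Lemma circulation_cut_closed (R : numDomainType) (d : 'I_P -> R) (S : pred 'I_N) :
  circulation d ->
  (forall l, S (src l) -> ~~ S (dst l) -> 0 < d l) ->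
  (forall l, ~~ S (src l) -> S (dst l) -> d l < 0) ->
  closed (uadj src dst) S.
Proof.
move=> circ out_pos in_neg.
pose cross l := ((S (src l))%:R - (S (dst l))%:R) * d l.
have cross_ge0 l : 0 <= cross l.
  rewrite /cross; move: (out_pos l) (in_neg l).
  case: (S (src l)); case: (S (dst l)) => /= h1 h2.
  - by rewrite subrr mul0r.
  - by rewrite subr0 mul1r ltW ?h1.
  - by rewrite sub0r mulN1r oppr_ge0 ltW ?h2.
  - by rewrite subrr mul0r.
have cross_eq0 l : cross l = 0.
  apply: (psumr_eq0P (P := predT) (fun i _ => cross_ge0 i)) => //.
  by rewrite -netflow_cut big1.
have same_side l : S (src l) = S (dst l).
  move: (cross_eq0 l) (out_pos l) (in_neg l); rewrite /cross.
  case: (S (src l)); case: (S (dst l)) => //= cross0 hout hin.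
  - rewrite subr0 mul1r in cross0.
    by move: (hout isT isT); rewrite cross0 ltxx.
  - rewrite sub0r mulN1r in cross0; move/eqP: cross0; rewrite oppr_eq0 => /eqP d0.
    by move: (hin isT isT); rewrite d0 ltxx.
move=> x y /existsP[l]; rewrite /joins.
by case/orP=> /andP[/eqP<- /eqP<-]; rewrite !unfold_in /= same_side.
Qed.

Definition touches (l : 'I_P) (v : 'I_N) : bool := (src l == v) || (dst l == v).

Definition is_path (vs : seq 'I_N) (es : seq 'I_P) : Prop :=
  [/\ size vs = (size es).+1, uniq vs, uniq es &
      forall i, i < size es -> forall (v0 : 'I_N) (e0 : 'I_P),
        joins src dst (nth e0 es i) (nth v0 vs i) (nth v0 vs i.+1)]%N.

Lemma joinsC l u v : joins src dst l u v = joins src dst l v u.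
Proof. by rewrite /joins orbC. Qed.

Lemma joins_touches l u v : joins src dst l u v -> touches l u.
Proof. by rewrite /joins /touches => /orP[] /andP[/eqP-> /eqP->]; rewrite eqxx ?orbT. Qed.

Lemma joins_touches_or l u v w : joins src dst l u v -> touches l w -> w = u \/ w = v.
Proof.
by rewrite /joins /touches => /orP[] /andP[/eqP-> /eqP->] /orP[] /eqP ->; auto.
Qed.

Lemma touches_joins l v : touches l v -> exists w, joins src dst l v w.
Proof.
rewrite /touches /joins => /orP[] /eqP<-; last by exists (src l); rewrite !eqxx orbT.
by exists (dst l); rewrite !eqxx.
Qed.

Lemma path_head_edge_notin v0 vs es l :
  is_path (v0 :: vs) es -> touches l v0 -> l \notin take 1 es -> l \notin es.
Proof.
move=> [hsz hu _ hj] tl hne; apply/negP => les.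
have hl : (index l es < size es)%N by rewrite index_mem.
have head_idx i : (i < size (v0 :: vs))%N -> (v0 == nth v0 (v0 :: vs) i) = (i == 0)%N.
  by move=> hi; rewrite -[X in X == _]/(nth v0 (v0 :: vs) 0) nth_uniq.
have := hj _ hl v0 l; rewrite nth_index // => /joins_touches_or /(_ tl) [] /eqP.
- rewrite head_idx ?hsz ?ltnS 1?ltnW // => /eqP.
  by case: es les hne {hsz hj hl} => //= e es _; rewrite inE eq_sym; case: (e == l).
- by rewrite head_idx ?hsz.
Qed.

Lemma path_close_cycle v0 vs es l w :
  is_path (v0 :: vs) es -> l \notin es -> joins src dst l v0 w -> w \in v0 :: vs ->
  let j := index w (v0 :: vs) in
  is_cycle src dst (take j.+1 (v0 :: vs)) (rcons (take j es) l).
Proof.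
move=> [hsz hu hue hj] les Jw win j.
have hjvs : (j < size (v0 :: vs))%N by rewrite index_mem.
have hjes : (j <= size es)%N by rewrite -ltnS -hsz.
split; rewrite ?size_rcons ?size_takel ?take_uniq //.
- by rewrite rcons_uniq take_uniq // andbT; apply: contra les; apply: mem_take.
move=> i hi v1 e1; rewrite nth_rcons size_takel // (nth_take _ hi).
case: (ltngtP i j) => hij.
- by rewrite modn_small // !nth_take //; apply: hj; apply: leq_trans hij hjes.
- by move: hi; rewrite ltnS leqNgt hij.
- by rewrite hij modnn /= nth_index // joinsC.
Qed.

Lemma path_extend v0 vs es l w :
  is_path (v0 :: vs) es -> l \notin es -> joins src dst l v0 w -> w \notin v0 :: vs ->
  is_path (w :: v0 :: vs) (l :: es).
Proof.
move=> [hsz hu hue hj] les Jw wnin; split => /=.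
- by rewrite -hsz.
- by rewrite wnin.
- by rewrite les.
- by case=> [|i] hi v1 e1 /=; [rewrite joinsC | apply: hj].
Qed.

Lemma circulation_other_edge (R : numDomainType) (d : 'I_P -> R) e v :
  circulation d -> d e != 0 -> src e != dst e -> touches e v ->
  exists l, [/\ d l != 0, l != e & touches l v].
Proof.
move=> circ de se te.
have [/existsP[l /and3P[]]|/existsPn none] :=
  boolP [exists l, [&& d l != 0, l != e & touches l v]]; first by exists l.
suff : netflow d v = ((v == src e)%:R - (v == dst e)%:R) * d e.
  rewrite circ => /esym/eqP; rewrite mulf_eq0 (negbTE de) orbF subr_eq0.
  move: te se; rewrite /touches eqr_nat => /orP[] /eqP<- /negbTE.
  - by move=> ->; rewrite eqxx.
  - by rewrite eq_sym => ->; rewrite eqxx.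
rewrite /netflow (bigD1 e) //= big1 ?addr0 // => l le.
have [->|dl] := eqVneq (d l) 0; first by rewrite mulr0.
move: (none l); rewrite dl le /touches negb_or => /andP[sl dl'].
by rewrite eq_sym (negbTE sl) eq_sym (negbTE dl') subrr mul0r.
Qed.

Section SupportCycle.

Variables (R : numDomainType) (d : 'I_P -> R).
Hypothesis circ : circulation d.
Let supp := [pred l | d l != 0].
Hypothesis acyclic_supp : forall vs es, is_cycle src dst vs es -> ~~ all supp es.

Lemma support_path_grow v0 vs es l :
  is_path (v0 :: vs) es -> all supp es -> supp l -> touches l v0 ->
  l \notin take 1 es -> exists w, is_path (w :: v0 :: vs) (l :: es).
Proof.
move=> hp hS Sl tl hne; have les := path_head_edge_notin hp tl hne.
have [w Jw] := touches_joins tl; exists w.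
have wnin : w \notin v0 :: vs.
  apply/negP => win; have := acyclic_supp (path_close_cycle hp les Jw win).
  rewrite all_rcons Sl /= => /negP; apply; apply/allP => x /mem_take.
  exact: (allP hS).
exact: path_extend hp les Jw wnin.
Qed.

Lemma support_long_path l0 : d l0 != 0 ->
  forall k, exists vs es, [/\ is_path vs es, all supp es & size es = k.+1].
Proof.
move=> dl0; elim=> [|k [[|v0 vs] [es [hp hS hk]]]].
- have hp0 : is_path [:: src l0] [::] by split.
  have tl0 : touches l0 (src l0) by rewrite /touches eqxx.
  have [w hp] := support_path_grow hp0 isT dl0 tl0 isT.
  by exists [:: w; src l0], [:: l0]; rewrite /= dl0.
- by case: hp.
case: es hS hk hp => [//|e0 es] hS [hk] hp; have /andP[de0 _] := hS.
have [hsz /andP[v0vs _] _ hj] := hp.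
have /= J0 := hj 0%N isT v0 e0.
have v0v1 : v0 != nth v0 vs 0.
  by apply: contraNneq v0vs => ->; rewrite mem_nth //; case: hsz => ->.
have se0 : src e0 != dst e0.
  apply: contra_neq v0v1 => se.
  by case/orP: J0 => /andP[/eqP<- /eqP<-]; rewrite se.
have [l [dl le0 tl]] := circulation_other_edge circ de0 se0 (joins_touches J0).
have l_new : l \notin take 1 (e0 :: es) by rewrite /= take0 inE.
have [w hp'] := support_path_grow hp hS dl tl l_new.
exists [:: w, v0 & vs], [:: l, e0 & es]; split=> //.
- by apply/andP; split.
- by rewrite /= hk.
Qed.

End SupportCycle.

Lemma circulation_eq0 (R : numDomainType) (d : 'I_P -> R) :
  circulation d ->
  (forall vs es, is_cycle src dst vs es -> exists2 l, l \in es & d l = 0) ->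
  forall l, d l = 0.
Proof.
move=> circ hcyc l0; apply/eqP/negPn/negP => dl0.
have acyclic vs es : is_cycle src dst vs es -> ~~ all [pred l | d l != 0] es.
  by case/hcyc=> l les dl; apply/allPn; exists l; rewrite //= dl eqxx.
have [vs [es [[hsz hu _ _] _ hk]]] := support_long_path circ acyclic dl0 N.
have := max_card (mem vs).
by rewrite card_ord (card_uniqP hu) hsz hk ltnNge leqnSn.
Qed.

End Circulations.

Lemma gas_flow_solution_psi_le (R : realFieldType) N P (src dst : 'I_P -> 'I_N)
    (comp : {set 'I_P}) (hconn : connected_graph src dst) (r : 'I_N) (psir : R)
    (q : 'cV[R]_N) (a alpha : 'I_P -> R)
    (ha : forall l, l \notin comp -> 0 < a l)
    (halpha : forall l, l \in comp -> 0 < alpha l)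
    (phi1 phi2 : 'cV[R]_P) (psi1 psi2 : 'cV[R]_N) :
  gas_flow_solution src dst comp r psir q a alpha phi1 psi1 ->
  gas_flow_solution src dst comp r psir q a alpha phi2 psi2 ->
  forall n, psi1 n 0 <= psi2 n 0.
Proof.
move=> [r1 A1 L1 _ C1] [r2 A2 L2 _ C2] n.
pose u m := psi1 m 0 - psi2 m 0.
pose S := [pred m | 0 < u m].
have comp_side l : l \in comp -> (0 < u (src l)) = (0 < u (dst l)).
  move=> lc; have [e1 _] := C1 l lc; have [e2 _] := C2 l lc.
  by rewrite /u e1 e2 -mulrBr pmulr_rgt0 ?halpha.
pose g x : R := Num.sg x * x ^+ 2.
have lossy_diff l : l \notin comp ->
    u (src l) - u (dst l) = a l * (g (phi1 l 0) - g (phi2 l 0)).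
  by move=> lc; have := L1 l lc; have := L2 l lc; rewrite /u /g -!mulrA; lra.
have closedS : closed (uadj src dst) S.
  apply: (circulation_cut_closed (circulationB A1 A2)) => l /= hs hd.
  - have lc : l \notin comp by apply: contraNN hd => lc; rewrite -comp_side.
    rewrite subr_gt0 -ltr_sgr_sqr -subr_gt0 -(pmulr_rgt0 _ (ha l lc)) -lossy_diff //.
    by rewrite subr_gt0; apply: le_lt_trans hs; rewrite leNgt.
  - have lc : l \notin comp by apply: contraNN hs => lc; rewrite comp_side.
    rewrite subr_lt0 -ltr_sgr_sqr -subr_lt0 -(pmulr_rlt0 _ (ha l lc)) -lossy_diff //.
    by rewrite subr_lt0; apply: le_lt_trans hd; rewrite leNgt.
have := closed_connect closedS (hconn r n).
by rewrite !unfold_in /= /u r1 r2 subrr ltxx => /esym/negbT; rewrite -leNgt subr_le0.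
Qed.

Theorem theorem1 (R : realFieldType) (N P : nat) (src dst : 'I_P -> 'I_N)
    (comp : {set 'I_P})
    (hconn : connected_graph src dst)
    (hcyc : forall (vs : seq 'I_N) (es : seq 'I_P),
        is_cycle src dst vs es -> exists2 l, l \in es & l \notin comp)
    (r : 'I_N) (psir : R) (q : 'cV[R]_N)
    (hq : \sum_(n < N) q n 0 = 0)
    (a alpha : 'I_P -> R)
    (ha : forall l, l \notin comp -> 0 < a l)
    (halpha : forall l, l \in comp -> 0 < alpha l)
    (phi1 phi2 : 'cV[R]_P) (psi1 psi2 : 'cV[R]_N) :
  gas_flow_solution src dst comp r psir q a alpha phi1 psi1 ->
  gas_flow_solution src dst comp r psir q a alpha phi2 psi2 ->
  phi1 = phi2 /\ psi1 = psi2.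
Proof.
(* [hq], [0 <= psi] and [0 <= phi] on compressors only matter for existence. *)
move=> s1 s2.
have psiE : psi1 = psi2.
  apply/matrixP => n j; rewrite (ord1 j); apply/le_anti.
  by rewrite (gas_flow_solution_psi_le hconn ha halpha s1 s2)
             (gas_flow_solution_psi_le hconn ha halpha s2 s1).
split=> //; case: s1 s2 => [_ A1 L1 _ _] [_ A2 L2 _ _].
have lossyE l : l \notin comp -> phi1 l 0 = phi2 l 0.
  move=> lc; apply: sgr_sqr_inj; apply: (mulfI (lt0r_neq0 (ha l lc))) => /=.
  by move: (L1 l lc) (L2 l lc); rewrite psiE -!mulrA => <- <-.
apply/matrixP => l j; rewrite (ord1 j); apply/eqP; rewrite -subr_eq0; apply/eqP.
apply: (circulation_eq0 (circulationB A1 A2)) => vs es /hcyc[l' les lc].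
by exists l'; rewrite // lossyE // subrr.
Qed.
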